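(* For every positive integer $n$, every proper arc-colouring of type I of the complete symmetric digraph $\overleftrightarrow{K_n}$ is distinguishing. Consequently, $$\chi'_{D_{1,2}}(\overleftrightarrow{K_n}) = \chi'_{1,2}(\overleftrightarrow{K_n}) = \min\left\{k : n \leq \binom{k}{\lfloor k/2\rfloor}\right\}.$$
   Context: For a simple graph $G$, the symmetric digraph $\overleftrightarrow{G}$ is obtained by replacing each edge $uv$ of $G$ by the pair of opposite arcs $\overrightarrow{uv}$ and $\overrightarrow{vu}$. An arc-colouring of $\overleftrightarrow{G}$ is proper of type I if any two consecutive arcs $\overrightarrow{uv},\overrightarrow{vw}$ (including the case $w=u$) receive distinct colours, i.e. there are no monochromatic 2-cycles and no monochromatic 2-paths. An arc-colouring is distinguishing if the only automorphism of $\overleftrightarrow{G}$ preserving the colour of every arc is the identity. $\chi'_{1,2}(\overleftrightarrow{G})$ is the least number of colours in a proper arc-colouring of type I of $\overleftrightarrow{G}$, and $\chi'_{D_{1,2}}(\overleftrightarrow{G})$ is the least number of colours in a distinguishing proper arc-colouring of type I. *)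

From mathcomp Require Import all_boot fingroup perm.
Set Implicit Arguments. Unset Strict Implicit. Unset Printing Implicit Defensive.

(* A simple graph on a finite vertex type T is given by an edge relation e
   (assumed symmetric and irreflexive).  The symmetric digraph of G has as arcs
   exactly the ordered pairs (u,v) with e u v.  An arc-colouring is a map
   c : T -> T -> nat whose value at (u,v) is the colour of the arc uv (values
   at non-arcs are irrelevant). *)

Definition simple_graph (T : finType) (e : rel T) :=
  irreflexive e /\ symmetric e.

Definition arc_colouring_with (T : finType) (e : rel T) (k : nat)
    (c : T -> T -> nat) :=
  forall u v, e u v -> c u v < k.

(* proper of type I: consecutive arcs uv, vw (w = u allowed) get distinct colours *)
Definition proper_I (T : finType) (e : rel T) (c : T -> T -> nat) :=
  forall u v w, e u v -> e v w -> c u v != c v w.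

Definition digraph_aut (T : finType) (e : rel T) (s : {perm T}) :=
  forall x y, e (s x) (s y) = e x y.

Definition colour_preserving (T : finType) (e : rel T) (c : T -> T -> nat)
    (s : {perm T}) :=
  forall x y, e x y -> c (s x) (s y) = c x y.

Definition distinguishing (T : finType) (e : rel T) (c : T -> T -> nat) :=
  forall s : {perm T}, digraph_aut e s -> colour_preserving e c s -> s = 1%g.

Definition is_least (P : nat -> Prop) (m : nat) :=
  P m /\ forall j, P j -> m <= j.

Definition chi12_is (T : finType) (e : rel T) (m : nat) :=
  is_least (fun k => exists c, arc_colouring_with e k c /\ proper_I e c) m.

Definition chiD12_is (T : finType) (e : rel T) (m : nat) :=
  is_least (fun k => exists c, [/\ arc_colouring_with e k c, proper_I e c
                                 & distinguishing e c]) m.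

Definition K (n : nat) : rel 'I_n := fun x y => x != y.
Arguments K n : clear implicits.

(* The out-colour sets O(v) = {c(v,y) : y <> v} of a proper type-I colouring
   of the complete symmetric digraph form an antichain: the colour of the arc
   uv lies in O(u), but not in O(v), since otherwise some arc vy would repeat
   it.  A colour-preserving automorphism s has O(v) contained in O(s v), hence
   fixes every vertex; and Sperner's theorem bounds the number n of vertices
   by C(k, k/2).  Conversely, n distinct k/2-subsets f(v) of the colours give
   a proper colouring by picking c(u,v) in f(u) minus f(v). *)

From mathcomp Require Import all_boot fingroup perm.
From mathcomp Require Import zify.

Set Implicit Arguments. Unset Strict Implicit. Unset Printing Implicit Defensive.

Lemma half_leq_self k : k./2 <= k.
Proof. by rewrite leq_half_double; lia. Qed.

Lemma leq_binS_half k m : m < k./2 -> 'C(k, m) <= 'C(k, m.+1).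
Proof.
move=> lt_m_half; rewrite -(leq_pmul2l (ltn0Sn m)) mul_bin_left.
by apply: leq_mul => //; move: lt_m_half; rewrite geq_half_double; lia.
Qed.

Lemma leq_bin_half k m : 'C(k, m) <= 'C(k, k./2).
Proof.
have below_half b : b <= k./2 -> 'C(k, b) <= 'C(k, k./2).
  move=> le_b_half.
  apply: (homo_leq_in (D := [pred i | i <= k./2]) (r := fun i j => i <= j))
    => //.
  - exact: leq_trans.
  - move=> i j _ le_j_half l /andP[_ /ltnW le_l_j].
    by rewrite inE (leq_trans le_l_j).
  - by move=> i _; rewrite inE; apply: leq_binS_half.
  - by rewrite inE.
have [|lt_half_m] := leqP m k./2; first exact: below_half.
have [le_m_k|lt_k_m] := leqP m k; last by rewrite bin_small.
rewrite -bin_sub // below_half // geq_half_double.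
by move: lt_half_m; rewrite ltn_half_double; lia.
Qed.

Lemma leq_fact_half k a : a <= k -> k./2`! * (k - k./2)`! <= a`! * (k - a)`!.
Proof.
move=> le_a_k.
rewrite -(leq_pmul2l (_ : 0 < 'C(k, a))) ?bin_gt0 // bin_fact //.
by rewrite -(bin_fact (half_leq_self k)) leq_mul2r leq_bin_half orbT.
Qed.

Section Sperner.

Variable T : finType.

Definition antichain (F : {set {set T}}) :=
  {in F &, forall A B : {set T}, A \subset B -> A = B}.

Lemma antichain_top (S : {set T}) (F : {set {set T}}) :
  {in F, forall A : {set T}, A \subset S} -> antichain F -> S \in F ->
  F = [set S].
Proof.
move=> FS antiF SF; apply/setP => A; rewrite inE.
by apply/idP/eqP => [AF|->//]; apply: antiF (FS A AF).
Qed.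

(* #|A|`! * (#|S| - #|A|)`! counts the maximal chains of subsets of S through
   A.  For A <> S, sorting these chains by their member S :\ x (x \notin A)
   gives the induction on #|S|. *)
Lemma lym (S : {set T}) (F : {set {set T}}) :
  {in F, forall A : {set T}, A \subset S} -> antichain F ->
  \sum_(A in F) #|A|`! * (#|S| - #|A|)`! <= #|S|`!.
Proof.
move Sk : #|S| => k; elim: k S F Sk => [|k IH] S F Sk FS antiF.
  have [SF|SnF] := boolP (S \in F).
    by rewrite (antichain_top FS antiF SF) big_set1 Sk.
  have S0 : S = set0 by apply/eqP; rewrite -cards_eq0 Sk.
  rewrite big_pred0 // => A; apply: contraNF SnF => AF.
  by rewrite S0; have := FS A AF; rewrite S0 subset0 => /eqP <-.
have [SF|SnF] := boolP (S \in F).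
  by rewrite (antichain_top FS antiF SF) big_set1 Sk subnn muln1.
have card_le_k A : A \in F -> #|A| <= k.
  move=> AF; rewrite -ltnS -Sk proper_card // properEneq FS // andbT.
  by apply: contraNneq SnF => <-.
have drop_point x : x \in S ->
    \sum_(A in F | x \notin A) #|A|`! * (k - #|A|)`! <= k`!.
  move=> xS.
  rewrite (eq_bigl (mem [set A in F | x \notin A])) => [|A]; last by rewrite !inE.
  apply: (IH (S :\ x)) => [|A|A B]; rewrite ?inE.
  - by move: Sk; rewrite (cardsD1 x S) xS add1n => -[].
  - by case/andP=> AF xA; rewrite subsetD1 FS.
  - by case/andP=> AF _ /andP[BF _]; apply: antiF.
have -> : \sum_(A in F) #|A|`! * (k.+1 - #|A|)`! =
          \sum_(x in S) \sum_(A in F | x \notin A) #|A|`! * (k - #|A|)`!.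
  rewrite (exchange_big_dep (mem F)) /=; last by move=> x A _ /andP[].
  apply: eq_bigr => A AF.
  rewrite (eq_bigl (mem (S :\: A))) => [|x]; last by rewrite !inE AF andbC.
  rewrite sum_nat_const cardsD (setIidPr (FS A AF)) Sk subSn ?card_le_k //.
  by rewrite factS mulnCA.
apply: (@leq_trans (\sum_(x in S) k`!)); first exact: leq_sum.
by rewrite sum_nat_const Sk factS.
Qed.

Lemma sperner (S : {set T}) (F : {set {set T}}) :
  {in F, forall A : {set T}, A \subset S} -> antichain F ->
  #|F| <= 'C(#|S|, #|S|./2).
Proof.
move=> FS antiF; set k := #|S|.
rewrite -(leq_pmul2r (_ : 0 < k./2`! * (k - k./2)`!)) ?muln_gt0 ?fact_gt0 //.
rewrite bin_fact ?half_leq_self // -sum_nat_const.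
apply: leq_trans (lym FS antiF); apply: leq_sum => A AF.
by apply: leq_fact_half; rewrite subset_leq_card ?FS.
Qed.

End Sperner.

Section OutColours.

Variables (T : finType) (e : rel T) (k : nat) (c : T -> T -> nat).

Definition out_colours (v : T) : {set 'I_k} :=
  [set i : 'I_k | [exists y, e v y && (c v y == i)]].

Lemma proper_out_colours_not_subset u v :
  arc_colouring_with e k c -> proper_I e c -> e u v ->
  ~~ (out_colours u \subset out_colours v).
Proof.
move=> ck properc uv; apply/subsetPn; exists (Ordinal (ck u v uv)).
  by rewrite inE; apply/existsP; exists v; rewrite uv eqxx.
rewrite inE; apply/existsP => -[y /andP[vy /eqP cvy]].
by move: (properc u v y uv vy); rewrite cvy eqxx.
Qed.

Lemma out_colours_sub_aut (s : {perm T}) v :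
  digraph_aut e s -> colour_preserving e c s ->
  out_colours v \subset out_colours (s v).
Proof.
move=> auts cs; apply/subsetP => i; rewrite !inE => /existsP[y /andP[vy cvy]].
by apply/existsP; exists (s y); rewrite auts vy cs.
Qed.

End OutColours.

Lemma proper_complete_distinguishing n k (c : 'I_n -> 'I_n -> nat) :
  arc_colouring_with (K n) k c -> proper_I (K n) c -> distinguishing (K n) c.
Proof.
move=> ck properc s auts cs; apply/permP => v; rewrite perm1.
apply/eqP; apply: contraT => svv.
have v_sv : K n v (s v) by rewrite /K eq_sym.
have := proper_out_colours_not_subset ck properc v_sv.
by rewrite out_colours_sub_aut.
Qed.

Lemma proper_complete_bound n k (c : 'I_n -> 'I_n -> nat) :
  arc_colouring_with (K n) k c -> proper_I (K n) c -> n <= 'C(k, k./2).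
Proof.
move=> ck properc; set out := out_colours (K n) k c.
have not_sub u v : u != v -> ~~ (out u \subset out v).
  exact: proper_out_colours_not_subset.
have out_inj : injective out.
  move=> u v out_uv; apply/eqP; apply: contraT => /not_sub.
  by rewrite out_uv subxx.
have := @sperner _ [set: 'I_k] (out @: [set: 'I_n]).
rewrite card_imset // !cardsT !card_ord; apply=> [A _|]; first exact: subsetT.
move=> _ _ /imsetP[u _ ->] /imsetP[v _ ->] sub_uv.
congr out; apply/eqP; move: sub_uv; apply: contraTT; exact: not_sub.
Qed.

Lemma proper_colouring_of_sets (T : finType) (e : rel T) k
    (f : T -> {set 'I_k}) :
  (forall u v, e u v -> ~~ (f u \subset f v)) ->
  exists c, arc_colouring_with e k c /\ proper_I e c.
Proof.
move=> f_not_sub.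
pose c u v := if [pick i in f u :\: f v] is Some i then val i else 0.
have c_spec u v : e u v -> exists2 i : 'I_k, i \in f u :\: f v & c u v = i.
  move=> uv; rewrite /c; case: pickP => [i fuv_i | no_pick]; first by exists i.
  by move: (f_not_sub u v uv); rewrite -setD_eq0 => /set0Pn[i]; rewrite no_pick.
exists c; split=> [u v uv | u v w uv vw].
  by have [i _ ->] := c_spec u v uv.
have [i fuv_i ->] := c_spec u v uv; have [j fvw_j ->] := c_spec v w vw.
apply: contraTneq fuv_i => /val_inj ->.
by move: fvw_j; rewrite !in_setD => /andP[_ ->].
Qed.

Lemma complete_proper_colouring n k :
  n <= 'C(k, k./2) ->
  exists c, arc_colouring_with (K n) k c /\ proper_I (K n) c.
Proof.
move=> n_le_bin.
have n_le_layer : n <= #|[set A : {set 'I_k} | #|A| == k./2]|.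
  by rewrite card_draws card_ord.
pose f (v : 'I_n) := enum_val (widen_ord n_le_layer v).
have f_card v : #|f v| = k./2.
  by have := enum_valP (widen_ord n_le_layer v); rewrite inE => /eqP.
have f_inj : injective f by move=> u v /enum_val_inj /(congr1 val) /= /val_inj.
apply: (@proper_colouring_of_sets _ _ _ f) => u v; apply: contra => sub_uv.
by apply/eqP/f_inj/eqP; rewrite eqEcard sub_uv !f_card /=.
Qed.

Theorem proposition2p1 (n : nat) (hn : 0 < n) :
  (forall (k : nat) (c : 'I_n -> 'I_n -> nat),
      arc_colouring_with (K n) k c -> proper_I (K n) c ->
      distinguishing (K n) c)
  /\ exists m : nat,
       [/\ is_least (fun k => n <= 'C(k, k./2)) m,
           chiD12_is (K n) m & chi12_is (K n) m].
Proof.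
split=> [k c|]; first exact: proper_complete_distinguishing.
have n_le_bin : n <= 'C(n, n./2) by rewrite -{1}(bin1 n) leq_bin_half.
have [m m_le_bin m_min] :=
  ex_minnP (ex_intro (fun k => n <= 'C(k, k./2)) n n_le_bin).
have [c [ck properc]] := complete_proper_colouring m_le_bin.
have c_distinguishing := proper_complete_distinguishing ck properc.
exists m; split.
- by split=> // j; apply: m_min.
- split=> [|j [c' [c'j properc' _]]]; first by exists c.
  exact/m_min/(proper_complete_bound c'j properc').
- split=> [|j [c' [c'j properc']]]; first by exists c.
  exact/m_min/(proper_complete_bound c'j properc').
Qed.
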